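(* Let $K$ be a field and let $I_A\subset K[x_1,\ldots,x_n]$ be a toric ideal of height $2$. Then $\mathrm{Split}(I_A)=\mu(I_A)$ and $\mathrm{Split}_{\mathrm{rad}}(I_A)=\mathrm{bar}(I_A)$.
   Context: $A=\{{\bf a}_1,\ldots,{\bf a}_n\}\subset\mathbb{Z}^m$ with $\ker_{\mathbb{Z}}(A)\cap\mathbb{N}^n=\{{\bf 0}\}$, where $\ker_{\mathbb{Z}}(A)=\{{\bf u}\in\mathbb{Z}^n\mid\sum u_i{\bf a}_i={\bf 0}\}$; $I_A$ is the kernel of $K[x_1,\ldots,x_n]\to K[t_1^{\pm1},\ldots,t_m^{\pm1}]$, $x_i\mapsto{\bf t}^{{\bf a}_i}$, and its height equals $\dim_{\mathbb{Q}}\ker_{\mathbb{Q}}(A)$. $\mu(I_A)$ is the minimal number of generators of $I_A$. $\mathrm{bar}(I_A)$ is the smallest $t$ such that there exist binomials $B_1,\ldots,B_t\in I_A$ with $I_A=\mathrm{rad}(B_1,\ldots,B_t)$. $\mathrm{Split}(I_A)$ is the smallest integer $s$ such that there exist toric ideals $I_{A_1},\ldots,I_{A_s}\subset K[x_1,\ldots,x_n]$ with $I_A=I_{A_1}+\cdots+I_{A_s}$ and $I_{A_i}\ne I_A$ for all $i$; $\mathrm{Split}_{\mathrm{rad}}(I_A)$ is the smallest integer $r$ such that there exist toric ideals $I_{A_1},\ldots,I_{A_r}\subset K[x_1,\ldots,x_n]$ with $I_A=\mathrm{rad}(I_{A_1}+\cdots+I_{A_r})$ and $I_{A_i}\ne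 I_A$ for all $i$. *)

From HB Require Import structures.
From mathcomp Require Import all_boot all_order all_algebra.
From mathcomp Require Import mpoly.

Set Implicit Arguments.
Unset Strict Implicit.
Unset Printing Implicit Defensive.

Import Order.TTheory GRing.Theory Num.Theory.
Local Open Scope ring_scope.

Definition pset (K : fieldType) (n : nat) := {mpoly K[n]} -> Prop.

Definition same_set (K : fieldType) (n : nat) (I J : pset K n) : Prop :=
  forall f, I f <-> J f.

(* A is the m x n integer matrix whose columns are a_1, ..., a_n.
   Amul A u = sum_i u_i a_i  (u in N^n, given as an exponent vector). *)
Definition Amul (m n : nat) (A : 'M[int]_(m, n)) (u : 'X_{1..n}) : 'cV[int]_m :=
  \col_(j < m) \sum_(i < n) A j i * (u i)%:Z.

Definition pointed (m n : nat) (A : 'M[int]_(m, n)) : Prop :=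
  forall u : 'X_{1..n}, Amul A u = 0 -> u = 0%MM.

(* The monomial map x_i |-> t^{a_i} sends f = sum_u c_u x^u to the Laurent
   polynomial sum_b (sum_{u : A u = b} c_u) t^b; its coefficient at t^b: *)
Definition toric_image (K : fieldType) (m n : nat) (A : 'M[int]_(m, n))
  (f : {mpoly K[n]}) (b : 'cV[int]_m) : K :=
  \sum_(u <- msupp f | Amul A u == b) f@_u.

Definition toric_ideal (K : fieldType) (m n : nat) (A : 'M[int]_(m, n)) : pset K n :=
  fun f => forall b : 'cV[int]_m, toric_image A f b = 0.

Arguments toric_ideal K [m n] A.

Definition is_toric (K : fieldType) (n : nat) (I : pset K n) : Prop :=
  exists (m' : nat) (B : 'M[int]_(m', n)), pointed B /\ same_set I (toric_ideal K B).

Definition ideal_gen (K : fieldType) (n t : nat) (g : 'I_t -> {mpoly K[n]}) : pset K n :=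
  fun f => exists c : 'I_t -> {mpoly K[n]}, f = \sum_(i < t) c i * g i.

Definition ideal_sum (K : fieldType) (n s : nat) (Is : 'I_s -> pset K n) : pset K n :=
  fun f => exists h : 'I_s -> {mpoly K[n]}, (forall i, Is i (h i)) /\ f = \sum_(i < s) h i.

Definition rad (K : fieldType) (n : nat) (J : pset K n) : pset K n :=
  fun f => exists k : nat, J (f ^+ k).

Definition binomial (K : fieldType) (n : nat) (B : {mpoly K[n]}) : Prop :=
  exists (u v : 'X_{1..n}) (c d : K), B = c *: 'X_[u] + d *: 'X_[v].

Definition least (P : nat -> Prop) (t : nat) : Prop :=
  P t /\ forall s, P s -> (t <= s)%N.

(* Properties whose least witnesses define mu, bar, Split, Split_rad. *)
Definition mu_prop (K : fieldType) (n : nat) (I : pset K n) (t : nat) : Prop :=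
  exists g : 'I_t -> {mpoly K[n]}, same_set I (ideal_gen g).

Definition bar_prop (K : fieldType) (n : nat) (I : pset K n) (t : nat) : Prop :=
  exists g : 'I_t -> {mpoly K[n]},
    (forall i, binomial (g i)) /\ (forall i, I (g i)) /\ same_set I (rad (ideal_gen g)).

Definition split_prop (K : fieldType) (n : nat) (I : pset K n) (s : nat) : Prop :=
  exists Is : 'I_s -> pset K n,
    (forall i, is_toric (Is i)) /\ (forall i, ~ same_set (Is i) I) /\
    same_set I (ideal_sum Is).

Definition split_rad_prop (K : fieldType) (n : nat) (I : pset K n) (r : nat) : Prop :=
  exists Is : 'I_r -> pset K n,
    (forall i, is_toric (Is i)) /\ (forall i, ~ same_set (Is i) I) /\
    same_set I (rad (ideal_sum Is)).

(* dim_Q ker_Q(A) = n - rank_Q(A). *)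
Definition kerQ_dim (m n : nat) (A : 'M[int]_(m, n)) : nat :=
  (n - \rank (map_mx (fun z : int => z%:~R : rat) A))%N.

(* A binomial x^u - x^v lies in I_A exactly when u - v lies in the lattice ker_Z(A),
   and I_B is contained in I_A exactly when ker_Z(B) is contained in ker_Z(A).  When
   ker_Q(A) has dimension 2, a proper toric subideal I_B has a kernel of rank at
   most 1, which is cyclic, so I_B is principal, generated by one binomial.
   Conversely, adding to A a row that vanishes on u - v but not on all of ker_Z(A)
   yields a proper toric subideal containing x^u - x^v.  So splittings of I_A into s
   proper toric ideals, exactly or up to radical, are the same as s binomials
   generating I_A, exactly or up to radical.  Finally I_A is graded by the A-degree
   with only the constants in degree 0, so a graded Nakayama argument turns any t
   generators of I_A into t binomial generators. *)

From Pilot Require Import Defs.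
From HB Require Import structures.
From mathcomp Require Import all_boot all_order all_algebra.
From mathcomp Require Import mpoly.
From mathcomp Require Import zify.
From mathcomp.algebra_tactics Require Import ring.
From Stdlib Require Import Wf_nat Classical.

Set Implicit Arguments.
Unset Strict Implicit.
Unset Printing Implicit Defensive.

Import Order.TTheory GRing.Theory Num.Theory.
Local Open Scope ring_scope.

Notation mpair n := ('X_{1..n} * 'X_{1..n})%type.

Definition binom (K : fieldType) (n : nat) (p : mpair n) : {mpoly K[n]} :=
  'X_[p.1] - 'X_[p.2].
Arguments binom {K n} p.

Section Ideals.
Variables (K : fieldType) (n : nat).
Implicit Types (J L : pset K n) (f q : {mpoly K[n]}).

Definition is_ideal J : Prop :=
  [/\ J 0, forall f q, J f -> J q -> J (f + q) & forall q f, J f -> J (q * f)].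

Lemma is_idealN J f : is_ideal J -> J f -> J (- f).
Proof. by case=> _ _ JM Jf; rewrite -mulN1r; apply: JM. Qed.

Lemma is_ideal_sum J (I : Type) (r : seq I) (P : pred I) (F : I -> {mpoly K[n]}) :
  is_ideal J -> (forall i, P i -> J (F i)) -> J (\sum_(i <- r | P i) F i).
Proof. by case=> J0 JD _ JF; apply: big_ind. Qed.

Lemma ideal_gen_is_ideal t (g : 'I_t -> {mpoly K[n]}) : is_ideal (ideal_gen g).
Proof.
split.
- by exists (fun _ => 0); rewrite big1 // => i _; rewrite mul0r.
- move=> _ _ [c ->] [c' ->]; exists (fun i => c i + c' i).
  by rewrite -big_split; apply: eq_bigr => i _; rewrite mulrDl.
- move=> q _ [c ->]; exists (fun i => q * c i).
  by rewrite mulr_sumr; apply: eq_bigr => i _; rewrite mulrA.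
Qed.

Lemma ideal_gen_in t (g : 'I_t -> {mpoly K[n]}) i : ideal_gen g (g i).
Proof.
exists (fun j => (i == j)%:R); rewrite (bigD1 i) //= eqxx mul1r big1 ?addr0 //.
by move=> j /negbTE; rewrite eq_sym => ->; rewrite mul0r.
Qed.

Lemma ideal_gen_min J t (g : 'I_t -> {mpoly K[n]}) :
  is_ideal J -> (forall i, J (g i)) -> forall f, ideal_gen g f -> J f.
Proof.
move=> idJ Jg _ [c ->]; apply: is_ideal_sum => // i _.
by case: idJ => _ _; apply.
Qed.

Lemma ideal_gen_drop N (g : 'I_N.+1 -> {mpoly K[n]}) k :
  ideal_gen (fun j => g (lift k j)) (g k) ->
  same_set (ideal_gen g) (ideal_gen (fun j => g (lift k j))).
Proof.
move=> gk f; split; apply: ideal_gen_min; try exact: ideal_gen_is_ideal.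
  by move=> i; case: (unliftP k i) => [j ->|->] //; apply: ideal_gen_in.
by move=> j; apply: ideal_gen_in.
Qed.

Lemma ideal_sum_mem s (Js : 'I_s -> pset K n) i f :
  (forall j, Js j 0) -> Js i f -> ideal_sum Js f.
Proof.
move=> Js0 Jf; exists (fun j => if j == i then f else 0); split.
  by move=> j; case: eqP => [->|].
by rewrite (bigD1 i) //= eqxx big1 ?addr0 // => j /negbTE ->.
Qed.

Lemma ideal_sum_min J s (Js : 'I_s -> pset K n) :
  is_ideal J -> (forall i f, Js i f -> J f) -> forall f, ideal_sum Js f -> J f.
Proof. by move=> idJ JsJ _ [h [Jh ->]]; apply: is_ideal_sum => // i _; apply: JsJ. Qed.

Lemma ideal_gen_sub_sum s (Js : 'I_s -> pset K n) (g : 'I_s -> {mpoly K[n]}) :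
  (forall i, is_ideal (Js i)) -> (forall i, Js i (g i)) ->
  forall f, ideal_gen g f -> ideal_sum Js f.
Proof.
move=> idJ Jg _ [c ->]; exists (fun i => c i * g i); split=> // i.
by case: (idJ i) => _ _; apply.
Qed.

Lemma ideal_sum_principal s (Js : 'I_s -> pset K n) (g : 'I_s -> {mpoly K[n]}) :
  (forall i, same_set (Js i) (ideal_gen (fun _ : 'I_1 => g i))) ->
  same_set (ideal_sum Js) (ideal_gen g).
Proof.
move=> Jg f; split=> [[h [Jh ->]]|[c ->]].
  have hc i : exists c, h i = c * g i.
    by have /Jg[c ->] := Jh i; exists (c ord0); rewrite big_ord1.
  by have [c {}hc] := fin_all_exists hc; exists c; apply: eq_bigr => i _.
exists (fun i => c i * g i); split=> // i.
by apply/Jg; exists (fun _ => c i); rewrite big_ord1.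
Qed.

Lemma same_set_rad J L : same_set J L -> same_set (Defs.rad J) (Defs.rad L).
Proof. by move=> JL f; split=> -[k Jk]; exists k; apply/JL. Qed.

Lemma rad_rad J f : Defs.rad (Defs.rad J) f -> Defs.rad J f.
Proof. by move=> [k [l Jkl]]; exists (k * l)%N; rewrite exprM. Qed.

Definition binom_ideal (s : seq (mpair n)) : pset K n :=
  ideal_gen (fun i : 'I_(size s) => binom (tnth (in_tuple s) i)).

Lemma binom_ideal_is_ideal s : is_ideal (binom_ideal s).
Proof. exact: ideal_gen_is_ideal. Qed.

Lemma binom_ideal_mem s p : p \in s -> binom_ideal s (binom p).
Proof.
move=> sp; have := ideal_gen_in (fun i : 'I_(size s) => binom (tnth (in_tuple s) i))
  (Ordinal (etrans (index_mem p s) sp)).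
by rewrite (tnth_nth p) /= nth_index.
Qed.

Lemma binom_ideal_min J s :
  is_ideal J -> {in s, forall p, J (binom p)} -> forall f, binom_ideal s f -> J f.
Proof. by move=> idJ Js; apply: ideal_gen_min => // i; apply/Js/mem_tnth. Qed.

Lemma binom_idealS s s' f :
  {subset s <= s'} -> binom_ideal s f -> binom_ideal s' f.
Proof.
move=> ss'; apply: binom_ideal_min; first exact: binom_ideal_is_ideal.
by move=> p /ss'; apply: binom_ideal_mem.
Qed.

End Ideals.

Section ToricIdeal.
Variables (K : fieldType) (n m : nat) (A : 'M[int]_(m, n)).
Implicit Types (f g q : {mpoly K[n]}) (u v w : 'X_{1..n}) (b : 'cV[int]_m).
Local Notation I := (toric_ideal K A).

Lemma Amul0 : Amul A 0%MM = 0.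
Proof. by apply/matrixP=> i j; rewrite !mxE big1 // => k _; rewrite mnm0E mulr0. Qed.

Lemma AmulD u v : Amul A (u + v)%MM = Amul A u + Amul A v.
Proof.
apply/matrixP=> i j; rewrite !mxE -big_split /=; apply: eq_bigr => k _.
by rewrite mnmDE PoszD mulrDr.
Qed.

Definition homog_part b f : {mpoly K[n]} :=
  \sum_(u <- msupp f | Amul A u == b) f@_u *: 'X_[u].

Lemma homog_part_coef b f w :
  (homog_part b f)@_w = if Amul A w == b then f@_w else 0.
Proof.
rewrite /homog_part raddf_sum /= big_mkcond /=.
rewrite (eq_bigr (fun u => if Amul A u == b then f@_u * (u == w)%:R else 0)); last first.
  by move=> u _; case: ifP; rewrite ?mcoeffZ ?mcoeffX ?mcoeff0.
case: (boolP (w \in msupp f)) => wf.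
  rewrite (bigD1_seq w) ?msupp_uniq //= eqxx mulr1 big1 ?addr0 // => u /negbTE ->.
  by rewrite mulr0; case: ifP.
rewrite big1_seq => [|u /andP[_ uf]]; first by rewrite memN_msupp_eq0 //; case: ifP.
have /negbTE -> : u != w by apply: contraNneq wf => <-.
by rewrite mulr0; case: ifP.
Qed.

Fact homog_part_is_linear b : linear (homog_part b).
Proof.
move=> c f g; apply/mpolyP=> w.
rewrite mcoeffD mcoeffZ !homog_part_coef mcoeffD mcoeffZ.
by case: ifP; rewrite ?mulr0 ?addr0.
Qed.

HB.instance Definition _ b :=
  GRing.isLinear.Build K {mpoly K[n]} {mpoly K[n]} _ (homog_part b)
    (homog_part_is_linear b).

Lemma homog_partX b u :
  homog_part b 'X_[u] = if Amul A u == b then 'X_[u] else 0.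
Proof.
apply/mpolyP=> w; rewrite homog_part_coef mcoeffX.
have [<-|neq_uw] := eqVneq u w; first by case: ifP; rewrite ?mcoeffX ?mcoeff0 ?eqxx.
by case: ifP; case: ifP; rewrite ?mcoeff0 ?mcoeffX ?(negbTE neq_uw).
Qed.

Lemma mcoeffMXE q u w :
  (q * 'X_[u])@_w = if (u <= w)%MM then q@_(w - u)%MM else 0.
Proof.
case: ifP => le_uw; first by rewrite -{1}(submK le_uw) addmC mcoeffMX.
apply/eqP; rewrite mcoeff_eq0 (perm_mem (msuppMX q u)).
by apply/mapP => -[u' _ w_eq]; move: le_uw; rewrite w_eq lem_addr.
Qed.

Lemma homog_partMX b q u :
  homog_part b (q * 'X_[u]) = homog_part (b - Amul A u) q * 'X_[u].
Proof.
apply/mpolyP=> w; rewrite homog_part_coef !mcoeffMXE homog_part_coef.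
case: (boolP (u <= w)%MM) => [le_uw|]; last by case: ifP.
rewrite -{1}(submK le_uw) AmulD; congr (if _ then _ else _).
by apply/eqP/eqP => [<-|->]; rewrite ?addrK ?subrK.
Qed.

Lemma homog_part0 f : pointed A -> homog_part 0 f = (f@_0%MM)%:MP.
Proof.
move=> ptA; apply/mpolyP=> w; rewrite homog_part_coef mcoeffC.
have [/ptA ->|Aw_neq0] := eqVneq (Amul A w) 0; first by rewrite eqxx mulr1.
case: eqP => [w0|]; last by rewrite mulr0.
by rewrite w0 Amul0 eqxx in Aw_neq0.
Qed.

Local Notation coef_sum := (meval (fun _ : 'I_n => 1 : K)).

Lemma coef_sumX u : coef_sum 'X_[u] = 1.
Proof. by rewrite mevalX big1 // => i _; rewrite expr1n. Qed.

Lemma toric_idealP f :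
  toric_ideal K A f <-> forall b, coef_sum (homog_part b f) = 0.
Proof.
suff toric_imageE b : toric_image A f b = coef_sum (homog_part b f).
  by split=> If b; move: (If b); rewrite toric_imageE.
rewrite /toric_image /homog_part raddf_sum /=; apply: eq_bigr => u _.
by rewrite mevalZ coef_sumX mulr1.
Qed.

Definition homog_pair (p : mpair n) := Amul A p.1 == Amul A p.2.

Lemma toric_ideal_is_ideal : is_ideal I.
Proof.
split.
- by apply/toric_idealP => b; rewrite !raddf0.
- move=> f g /toric_idealP If /toric_idealP Ig; apply/toric_idealP => b.
  by rewrite !raddfD /= If Ig addr0.
- move=> q f /toric_idealP If; apply/toric_idealP => b.
  rewrite [q]mpolyE mulr_suml (raddf_sum (homog_part b)) raddf_sum big1 //= => u _.
  by rewrite -scalerAl linearZ /= mulrC homog_partMX mevalZ mevalM If mul0r mulr0.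
Qed.

Lemma binom_toricP p : I (binom p) <-> homog_pair p.
Proof.
split=> [/toric_idealP/(_ (Amul A p.1))|/eqP Ap].
  rewrite /binom (raddfB (homog_part _)) /= !homog_partX eqxx.
  case: eqP => [/esym/eqP //|_].
  by rewrite subr0 coef_sumX => /eqP; rewrite oner_eq0.
apply/toric_idealP => b; rewrite /binom (raddfB (homog_part _)) /= !homog_partX Ap.
by case: eqP; rewrite ?subrr ?raddf0 // raddfB /= !coef_sumX subrr.
Qed.

Lemma homog_part_mul_binom b q p : homog_pair p ->
  homog_part b (q * binom p) = homog_part (b - Amul A p.1) q * binom p.
Proof. by move=> /eqP Ap; rewrite /binom mulrBr raddfB /= !homog_partMX Ap mulrBr. Qed.

Lemma binomial_toric g : Defs.binomial g -> I g ->
  exists c p, homog_pair p /\ g = c *: binom p.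
Proof.
move=> [u [v [c [d ->]]]] /toric_idealP Ig.
have := Ig (Amul A u); have := Ig (Amul A v).
rewrite !(raddfD (homog_part _)) /= !linearZ /= !homog_partX !eqxx (eq_sym (Amul A v)).
case Auv: (Amul A u == Amul A v);
  rewrite !raddfD /= !mevalZ ?raddf0 !coef_sumX !mulr1 ?mulr0 ?addr0 ?add0r.
  move=> _ /eqP; rewrite addrC addr_eq0 => /eqP ->.
  by exists c, (u, v); rewrite /binom /homog_pair Auv scalerBr scaleNr.
move=> d0 c0; exists 0, (u, u).
by rewrite /homog_pair eqxx c0 d0 !scale0r addr0.
Qed.

Lemma fibre_partner f u : I f -> u \in msupp f ->
  exists2 v, v \in msupp f & (v != u) && (Amul A v == Amul A u).
Proof.
move=> If uf; apply/hasP; apply/negPn/negP => /hasPn no_partner.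
have := If (Amul A u); rewrite /toric_image big_mkcond (bigD1_seq u) ?msupp_uniq //=.
rewrite eqxx big1 ?addr0 => [/eqP|w neq_wu]; first by rewrite mcoeff_eq0 uf.
case: ifP => // Awu; apply/memN_msupp_eq0/negP => wf.
by move: (no_partner w wf); rewrite neq_wu Awu.
Qed.

Lemma msupp_cancel f u v : u \in msupp f -> v \in msupp f -> v != u ->
  (size (msupp (f - f@_u *: binom (u, v))) < size (msupp f))%N.
Proof.
move=> uf vf neq_vu.
have sub_rem : {subset msupp (f - f@_u *: binom (u, v)) <= rem u (msupp f)}.
  move=> w; rewrite (mem_rem_uniq _ (msupp_uniq f)) /= !mcoeff_msupp.
  rewrite mcoeffB mcoeffZ mcoeffB !mcoeffX.
  have [<-|neq_uw] := eqVneq u w; first by rewrite (negbTE neq_vu) subr0 mulr1 subrr eqxx.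
  have [<-|_] := eqVneq v w; first by rewrite !inE neq_vu vf.
  by rewrite subr0 mulr0 subr0 !inE (eq_sym w) neq_uw mcoeff_msupp.
have := uniq_leq_size (msupp_uniq _) sub_rem.
by rewrite size_rem //; case: (msupp f) uf.
Qed.

Lemma toric_ideal_binom_decomp f : I f ->
  exists2 s, all homog_pair s & binom_ideal s f.
Proof.
have [k] := ubnP (size (msupp f)); elim: k f => // k IH f lt_fk If.
have [->|nz_f] := eqVneq f 0.
  by exists [::]; last by exists (fun _ => 0); rewrite big_ord0.
set u := mlead f; have uf : u \in msupp f := mlead_supp nz_f.
have [v vf /andP[neq_vu Avu]] := fibre_partner If uf.
have huv : homog_pair (u, v) by rewrite /homog_pair eq_sym.
set f' := f - f@_u *: binom (u, v).
have If' : I f'.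
  case: toric_ideal_is_ideal => _ ID IM; apply: ID If _.
  by rewrite -scaleNr -mul_mpolyC; apply/IM/binom_toricP.
have lt_f'k : (size (msupp f') < k)%N := leq_trans (msupp_cancel uf vf neq_vu) lt_fk.
have [s hs f's] := IH f' lt_f'k If'.
exists ((u, v) :: s); first by rewrite /= huv.
have -> : f = f' + (f@_u)%:MP * binom (u, v) by rewrite mul_mpolyC subrK.
have [_ ID IM] := binom_ideal_is_ideal K ((u, v) :: s).
apply: ID; last by apply: IM; apply: binom_ideal_mem; rewrite mem_head.
by apply: binom_idealS f's => p sp; rewrite inE sp orbT.
Qed.

End ToricIdeal.

Arguments binom_toricP {K n m A p}.

Lemma fewer_generators_relation (K : fieldType) (n N t : nat)
    (T : 'I_N -> {mpoly K[n]}) (g : 'I_t -> {mpoly K[n]}) :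
  (forall k, ideal_gen g (T k)) -> (forall i, ideal_gen T (g i)) -> (t < N)%N ->
  exists e : 'I_N -> {mpoly K[n]},
    \sum_k e k * T k = 0 /\ exists k, (e k)@_0%MM != 0.
Proof.
move=> Tg gT lt_tN.
have [r Tr] := fin_all_exists Tg; have [r' gr'] := fin_all_exists gT.
(* A nonzero left kernel vector c of the constant terms of r exists as t < N; then
   sum_k (c_k - sum_i p_i r'_ik) T_k = 0, where the p_i = sum_k c_k r_ki have no
   constant term. *)
pose M : 'M[K]_(N, t) := \matrix_(k, i) (r k i)@_0%MM.
have : ~~ row_free M by rewrite /row_free neq_ltn (leq_ltn_trans (rank_leq_col M)).
rewrite -kermx_eq0 => /rowV0Pn [c /sub_kermxP cM /rV0Pn [k0 ck0]].
pose p i := \sum_k (c 0 k)%:MP * r k i.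
have p0 i : (p i)@_0%MM = 0.
  move/matrixP: cM => /(_ 0 i); rewrite !mxE => <-.
  by rewrite raddf_sum /=; apply: eq_bigr => k _; rewrite mcoeffCM mxE.
exists (fun k => (c 0 k)%:MP - \sum_i p i * r' i k); split; last first.
  exists k0; rewrite mcoeffB mcoeffC eqxx mulr1 raddf_sum /= big1 ?subr0 // => i _.
  by rewrite rmorphM /= p0 mul0r.
under eq_bigr do rewrite mulrBl; apply/eqP; rewrite sumrB subr_eq0; apply/eqP.
transitivity (\sum_i p i * g i).
  under eq_bigr do rewrite Tr mulr_sumr; rewrite exchange_big /=.
  by apply: eq_bigr => i _; rewrite mulr_suml; apply: eq_bigr => k _; rewrite mulrA.
under eq_bigr do rewrite gr' mulr_sumr; rewrite exchange_big /=.
by apply: eq_bigr => k _; rewrite mulr_suml; apply: eq_bigr => i _; rewrite mulrA.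
Qed.

Section BinomialGenerators.
Variables (K : fieldType) (n m : nat) (A : 'M[int]_(m, n)).
Hypothesis ptA : pointed A.
Local Notation I := (toric_ideal K A).
Local Notation binom := (@binom K n).

Lemma binom_relation_redundant N (P : 'I_N.+1 -> mpair n)
    (e : 'I_N.+1 -> {mpoly K[n]}) k :
  (forall k, homog_pair A (P k)) -> \sum_k e k * binom (P k) = 0 ->
  (e k)@_0%MM != 0 -> ideal_gen (fun j => binom (P (lift k j))) (binom (P k)).
Proof.
(* In the A-degree of (P k).1, the coefficient of binom (P k) in the relation is
   the unit (e k)@_0, because A is pointed. *)
move=> hP rel; set c := (e k)@_0%MM => c_neq0.
have := congr1 (homog_part A (Amul A (P k).1)) rel.
rewrite raddf0 raddf_sum (bigD1_ord k) //= homog_part_mul_binom // subrr homog_part0 //.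
under eq_bigr do rewrite (homog_part_mul_binom _ _ (hP _)).
move=> /eqP; rewrite addr_eq0 => /eqP Pk.
exists (fun j => - (c^-1)%:MP *
  homog_part A (Amul A (P k).1 - Amul A (P (lift k j)).1) (e (lift k j))).
have -> : binom (P k) = (c^-1)%:MP * (c%:MP * binom (P k)).
  by rewrite mulrA -mpolyCM mulVf // mpolyC1 mul1r.
rewrite Pk mulrN mulr_sumr -sumrN; apply: eq_bigr => j _.
by rewrite !mulNr mulrA.
Qed.

Lemma homog_binom_generators_shrink t (g : 'I_t -> {mpoly K[n]}) N (P : 'I_N -> mpair n) :
  same_set I (ideal_gen g) -> (forall k, homog_pair A (P k)) ->
  same_set I (ideal_gen (fun k => binom (P k))) -> (t <= N)%N ->
  exists Q : 'I_t -> mpair n,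
    (forall i, homog_pair A (Q i)) /\ same_set I (ideal_gen (fun i => binom (Q i))).
Proof.
move=> Ig; elim: N P => [|N IH] P hP IP le_tN.
  by move: le_tN; rewrite leqn0 => /eqP ->; exists P.
have [->|neq_tN] := eqVneq t N.+1; first by exists P.
have lt_tN : (t < N.+1)%N by rewrite ltn_neqAle neq_tN.
have [e [rel [k ek]]] : exists e : 'I_N.+1 -> {mpoly K[n]},
    \sum_k e k * binom (P k) = 0 /\ exists k, (e k)@_0%MM != 0.
  apply: fewer_generators_relation lt_tN => [k|i].
    by apply/Ig/IP/ideal_gen_in.
  by apply/IP/Ig/ideal_gen_in.
apply: (IH (fun j => P (lift k j))) => [j|f|]; first exact: hP; last exact: lt_tN.
by rewrite IP; apply: ideal_gen_drop; apply: binom_relation_redundant rel ek.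
Qed.

Lemma binomial_generators t : mu_prop I t ->
  exists P : 'I_t -> mpair n,
    (forall i, homog_pair A (P i)) /\ same_set I (ideal_gen (fun i => binom (P i))).
Proof.
move=> [g Ig].
have decomp i : exists s, all (homog_pair A) s /\ binom_ideal s (g i).
  have [s hs gs] := toric_ideal_binom_decomp (proj2 (Ig _) (ideal_gen_in g i)).
  by exists s.
have [S hS] := fin_all_exists decomp.
(* The t trivial pairs in front only guarantee that the family has at least t members. *)
pose s := nseq t (0%MM, 0%MM) ++ flatten [seq S i | i <- enum 'I_t].
have hs : all (homog_pair A) s.
  apply/allP => p; rewrite mem_cat => /orP[/nseqP[-> _]|]; first exact: eqxx.
  by case/flattenP => _ /mapP[i _ ->]; apply/allP; case: (hS i).
apply: (homog_binom_generators_shrink (P := fun k => tnth (in_tuple s) k) Ig).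
- by move=> k; apply: (allP hs); apply: mem_tnth.
- move=> f; split.
    move/Ig; apply: ideal_gen_min; first exact: binom_ideal_is_ideal.
    move=> i; apply: binom_idealS (proj2 (hS i)) => p Sp.
    rewrite mem_cat; apply/orP; right; apply/flattenP.
    by exists (S i) => //; apply: map_f; rewrite mem_enum.
  apply: binom_ideal_min; first exact: toric_ideal_is_ideal.
  by move=> p /(allP hs) /binom_toricP.
- by rewrite size_cat size_nseq leq_addr.
Qed.

End BinomialGenerators.

Lemma ex_minn_classical (P : nat -> Prop) :
  (exists k, P k) -> exists k, P k /\ forall j, P j -> (k <= j)%N.
Proof.
move=> exP; have [k [[Pk kmin] _]] :=
  dec_inh_nat_subset_has_unique_least_element P (fun k => classic (P k)) exP.
by exists k; split=> // j /kmin /ssrnat.leP.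
Qed.

Definition ratmx p q (M : 'M[int]_(p, q)) : 'M[rat]_(p, q) :=
  map_mx (fun z : int => z%:~R : rat) M.

Lemma ratmx_eq0 p q (M : 'M[int]_(p, q)) : (ratmx M == 0) = (M == 0).
Proof.
apply/eqP/eqP => [/matrixP ratM0|->]; last by apply/matrixP => i j; rewrite !mxE.
by apply/matrixP => i j; move: (ratM0 i j); rewrite !mxE => /eqP; rewrite intr_eq0 => /eqP.
Qed.

Lemma ratmxB p q (M N : 'M[int]_(p, q)) : ratmx (M - N) = ratmx M - ratmx N.
Proof. exact: map_mxB. Qed.

Lemma ratmxZ p q (z : int) (M : 'M[int]_(p, q)) : ratmx (z *: M) = z%:~R *: ratmx M.
Proof. by apply/matrixP => i j; rewrite !mxE rmorphM. Qed.

Lemma rat_rV_int_multiple n (r : 'rV[rat]_n) :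
  exists2 N : int, N != 0 & exists z, ratmx z = N%:~R *: r.
Proof.
exists (\prod_i denq (r 0 i)); first by apply/prodf_neq0 => i _; rewrite denq_neq0.
exists (\row_i (numq (r 0 i) * \prod_(j | j != i) denq (r 0 j))).
apply/rowP => i; rewrite !mxE rmorphM /= rmorph_prod /= [in RHS](bigD1 i) //=.
by rewrite rmorphM /= rmorph_prod /= numqE; ring.
Qed.

Section Lattice.
Variable n : nat.
Implicit Types (u v : 'X_{1..n}) (w d e : 'rV[int]_n).

Definition kerZ p (B : 'M[int]_(p, n)) : pred 'rV[int]_n := [pred w | w *m B^T == 0].

Definition kerQ p (B : 'M[int]_(p, n)) : 'M[rat]_n := kermx (ratmx B)^T.

Definition mnm_rV u : 'rV[int]_n := \row_i (u i)%:Z.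

Definition mpos w : 'X_{1..n} :=
  [multinom (if (0 <= w 0%R i)%R then `|w 0%R i|%N else 0%N) | i < n].

Definition mneg w : 'X_{1..n} :=
  [multinom (if (w 0%R i < 0)%R then `|w 0%R i|%N else 0%N) | i < n].

Lemma mnm_rV_inj : injective mnm_rV.
Proof. by move=> u v /rowP uv; apply/mnmP => i; move: (uv i); rewrite !mxE => -[]. Qed.

Lemma mnm_rV_pos_neg w : mnm_rV (mpos w) - mnm_rV (mneg w) = w.
Proof.
apply/rowP => i; rewrite !mxE !mnmE.
case: (lerP 0 (w 0 i)) => w_i; first by rewrite subr0 abszE ger0_norm.
by rewrite sub0r abszE ltr0_norm // opprK.
Qed.

Lemma Amul_mnm_rV p (B : 'M[int]_(p, n)) u : Amul B u = (mnm_rV u *m B^T)^T.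
Proof.
by apply/matrixP => j k; rewrite !mxE; apply: eq_bigr => i _; rewrite !mxE mulrC.
Qed.

Lemma Amul_eqE p (B : 'M[int]_(p, n)) u v :
  (Amul B u == Amul B v) = (mnm_rV u - mnm_rV v \in kerZ B).
Proof. by rewrite !Amul_mnm_rV (inj_eq (@trmx_inj _ _ _)) inE mulmxBl subr_eq0. Qed.

Lemma kerZZ p (B : 'M[int]_(p, n)) (z : int) w : w \in kerZ B -> z *: w \in kerZ B.
Proof. by rewrite !inE -scalemxAl => /eqP ->; rewrite scaler0. Qed.

Lemma kerZ_col_mx p q (B : 'M[int]_(p, n)) (C : 'M[int]_(q, n)) w :
  (w \in kerZ (col_mx B C)) = (w \in kerZ B) && (w \in kerZ C).
Proof. by rewrite !inE tr_col_mx mul_mx_row row_mx_eq0. Qed.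

Lemma kerZ_kerQ p (B : 'M[int]_(p, n)) w :
  (w \in kerZ B) = (ratmx w <= kerQ B)%MS.
Proof. by rewrite inE sub_kermx /ratmx map_trmx -map_mxM -ratmx_eq0. Qed.

Lemma rank_kerQ p (B : 'M[int]_(p, n)) : \rank (kerQ B) = kerQ_dim B.
Proof. by rewrite mxrank_ker mxrank_tr. Qed.

Lemma kerQ_int_multiple p (B : 'M[int]_(p, n)) r : (r <= kerQ B)%MS ->
  exists2 N : int, N != 0 & exists2 z, z \in kerZ B & ratmx z = N%:~R *: r.
Proof.
move=> rB; have [N N0 [z zr]] := rat_rV_int_multiple r.
by exists N => //; exists z => //; rewrite kerZ_kerQ zr scalemx_sub.
Qed.

Lemma kerQS p q (B : 'M[int]_(p, n)) (C : 'M[int]_(q, n)) :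
  {subset kerZ B <= kerZ C} -> (kerQ B <= kerQ C)%MS.
Proof.
move=> BC; apply/row_subP => k.
have [N N0 [z /BC]] := kerQ_int_multiple (row_sub k (kerQ B)).
rewrite kerZ_kerQ => + zr; rewrite zr => /(scalemx_sub (N%:~R)^-1).
by rewrite scalerA mulVf ?intr_eq0 // scale1r.
Qed.

Lemma kerZ_neq0 p (B : 'M[int]_(p, n)) :
  (0 < \rank (kerQ B))%N -> exists2 w, w \in kerZ B & w != 0.
Proof.
rewrite lt0n mxrank_eq0 => /rowV0Pn[r rB r0].
have [N N0 [z zB zr]] := kerQ_int_multiple rB.
by exists z => //; rewrite -ratmx_eq0 zr scaler_eq0 negb_or intr_eq0 N0.
Qed.

Definition l1 w : nat := \sum_i `|w 0%R i|%N.

Lemma l1_lt_frac e d (a : rat) : d != 0 -> ratmx e = a *: ratmx d -> 0 <= a -> a < 1 ->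
  (l1 e < l1 d)%N.
Proof.
move=> d0 ea a0 a1.
have l1E w : (l1 w)%:R = \sum_i `|ratmx w 0 i| :> rat.
  by rewrite /l1 natr_sum; apply: eq_bigr => i _; rewrite mxE natr_absz intr_norm.
have l1d_gt0 : (0 < l1 d)%N.
  by case/rV0Pn: d0 => i di; rewrite /l1 (bigD1 i) //= ltn_addr // absz_gt0.
rewrite -(ltr_nat rat) !l1E ea.
under eq_bigr do rewrite mxE normrM (ger0_norm a0).
by rewrite -mulr_sumr -l1E gtr_pMl // ltr0n.
Qed.

Lemma kerZ_line p (B : 'M[int]_(p, n)) d w : (\rank (kerQ B) <= 1)%N ->
  d \in kerZ B -> d != 0 -> w \in kerZ B -> exists a : rat, ratmx w = a *: ratmx d.
Proof.
rewrite !kerZ_kerQ => rk1 dB d0 wB; apply/sub_rVP; apply: submx_trans wB _.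
have [_ <-] := mxrank_leqif_sup dB.
by rewrite eqn_leq mxrankS //= rank_rV ratmx_eq0 d0.
Qed.

Lemma kerZ_cyclic p (B : 'M[int]_(p, n)) : (\rank (kerQ B) <= 1)%N ->
  exists2 d, d \in kerZ B & forall w, w \in kerZ B -> exists z : int, w = z *: d.
Proof.
move=> rk1; have [rk0|rk_pos] := posnP (\rank (kerQ B)).
  exists 0 => [|w]; first by rewrite inE mul0mx.
  rewrite kerZ_kerQ => /mxrankS; rewrite rk0 leqn0 mxrank_eq0 ratmx_eq0 => /eqP ->.
  by exists 0; rewrite scale0r.
(* A nonzero kernel vector of minimal l1-norm generates: w - floor(a) d would be
   shorter. *)
pose P k := exists2 d, (d \in kerZ B) && (d != 0) & l1 d = k.
have [_ [[d /andP[dB d0] <-] dmin]] : exists k, P k /\ forall j, P j -> (k <= j)%N.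
  apply: ex_minn_classical; have [d dB d0] := kerZ_neq0 rk_pos.
  by exists (l1 d), d; rewrite ?dB.
exists d => // w wB; have [a wa] := kerZ_line rk1 dB d0 wB.
exists (Num.floor a); set e := w - Num.floor a *: d.
have eB : e \in kerZ B by rewrite inE mulmxBl -scalemxAl (eqP wB) (eqP dB) scaler0 subrr.
have ea : ratmx e = (a - (Num.floor a)%:~R) *: ratmx d.
  by rewrite ratmxB ratmxZ wa scalerBl.
apply/eqP; rewrite -subr_eq0 -/e; apply/negPn/negP => e0.
have := dmin (l1 e) (ex_intro2 _ _ e (introT andP (conj eB e0)) erefl).
rewrite leqNgt (l1_lt_frac d0 ea) // ?subr_ge0 ?floor_le //.
by have := floorD1_gt a; rewrite rmorphD /= ltrBlDr addrC.
Qed.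

Definition minor_row d (i j : 'I_n) : 'rV[int]_n :=
  d 0 j *: delta_mx 0 i - d 0 i *: delta_mx 0 j.

Lemma minor_row_mul d i j w :
  (w *m (minor_row d i j)^T) 0 0 = d 0 j * w 0 i - d 0 i * w 0 j.
Proof.
rewrite /minor_row linearB /= !linearZ /= !trmx_delta mulmxDr -!scalemxAr mulmxN.
by rewrite -!colE !mxE mulrN.
Qed.

Lemma kerZ_minor_row d i j w :
  (w \in kerZ (minor_row d i j)) = (d 0 j * w 0 i == d 0 i * w 0 j).
Proof.
rewrite inE -[_ == d 0 i * w 0 j]subr_eq0 -minor_row_mul.
apply/eqP/eqP => [->|M00]; first by rewrite mxE.
by apply/matrixP => a b; rewrite !ord1 M00 mxE.
Qed.

Lemma minors_eq0_line d w : d != 0 ->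
  (forall i j, d 0 j * w 0 i = d 0 i * w 0 j) -> (ratmx w <= ratmx d)%MS.
Proof.
case/rV0Pn => l dl minors; apply/sub_rVP; exists ((w 0 l)%:~R / (d 0 l)%:~R).
apply/rowP => i; rewrite !mxE.
have dl' : (d 0 l)%:~R != 0 :> rat by rewrite intr_eq0.
apply: (mulfI dl'); rewrite -rmorphM /= minors rmorphM /=.
by field.
Qed.

Lemma kerZ_not_line p (B : 'M[int]_(p, n)) d : (1 < \rank (kerQ B))%N -> d != 0 ->
  exists w i j, w \in kerZ B /\ d 0 j * w 0 i != d 0 i * w 0 j.
Proof.
move=> rk2 d0.
have : ~~ (kerQ B <= ratmx d)%MS.
  by apply: contraTN rk2 => /mxrankS; rewrite rank_rV ratmx_eq0 d0 -leqNgt.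
case/row_subPn => k /negP nsub.
have [N N0 [w wB wr]] := kerQ_int_multiple (row_sub k (kerQ B)).
have [/existsP[i /existsP[j wij]]|/existsPn all0] :=
  boolP [exists i, exists j, d 0 j * w 0 i != d 0 i * w 0 j].
  by exists w, i, j.
case: nsub; have -> : row k (kerQ B) = (N%:~R)^-1 *: ratmx w.
  by rewrite wr scalerA mulVf ?intr_eq0 ?scale1r.
apply/scalemx_sub/minors_eq0_line => // i j.
by apply/eqP; move/existsPn: (all0 i) => /(_ j); rewrite negbK.
Qed.

End Lattice.

Section ToricLattice.
Variables (K : fieldType) (n : nat).
Implicit Types (u v : 'X_{1..n}) (w d : 'rV[int]_n).
Local Notation binom := (@binom K n).

Lemma binom_toric_kerZ p (B : 'M[int]_(p, n)) u v :
  toric_ideal K B (binom (u, v)) <-> mnm_rV u - mnm_rV v \in kerZ B.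
Proof. by rewrite binom_toricP /homog_pair Amul_eqE. Qed.

Lemma toric_ideal_subP p q (B : 'M[int]_(p, n)) (C : 'M[int]_(q, n)) :
  (forall f, toric_ideal K B f -> toric_ideal K C f) <-> {subset kerZ B <= kerZ C}.
Proof.
split=> [BC w wB|BC f /toric_ideal_binom_decomp[s hs]].
  rewrite -(mnm_rV_pos_neg w); apply/binom_toric_kerZ/BC/binom_toric_kerZ.
  by rewrite mnm_rV_pos_neg.
apply: binom_ideal_min; first exact: toric_ideal_is_ideal.
by case=> u v /(allP hs); rewrite /homog_pair Amul_eqE => /BC /binom_toric_kerZ.
Qed.

Lemma pointedS p q (B : 'M[int]_(p, n)) (C : 'M[int]_(q, n)) :
  {subset kerZ B <= kerZ C} -> pointed C -> pointed B.
Proof.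
move=> BC ptC u /eqP; rewrite -(Amul0 B) Amul_eqE => /BC.
by rewrite -Amul_eqE Amul0 => /eqP /ptC.
Qed.

Lemma binom_shift (N : nat) d u v : mnm_rV u - mnm_rV v = N.+1%:Z *: d ->
  exists v' c, mnm_rV u - mnm_rV v' = N%:Z *: d /\
    binom (u, v) = binom (u, v') + 'X_[c] * binom (mpos d, mneg d).
Proof.
(* v' := v + d is an exponent vector because u - v = (N + 1) d with u >= 0. *)
move=> uv; have uv_i i : (u i)%:Z - (v i)%:Z = N.+1%:Z * d 0 i.
  by move/rowP: uv => /(_ i); rewrite !mxE.
have vd_ge0 i : 0 <= (v i)%:Z + d 0 i by have := uv_i i; nia.
pose v' : 'X_{1..n} := [multinom absz ((v i)%:Z + d 0%R i)%R | i < n].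
have v'_i i : (v' i)%:Z = (v i)%:Z + d 0 i by rewrite mnmE abszE ger0_norm.
exists v', (v' - mpos d)%MM; split.
  apply/rowP => i; rewrite !mxE v'_i opprD addrA uv_i.
  by rewrite -addn1 PoszD mulrDl mul1r addrK.
have v'E : v' = ((v' - mpos d) + mpos d)%MM.
  by apply/mnmP => k; have := v'_i k; have := vd_ge0 k; rewrite !mnmE; case: ifP; lia.
have vE : v = ((v' - mpos d) + mneg d)%MM.
  apply/mnmP => k; have := v'_i k; have := vd_ge0 k.
  by rewrite !mnmE; case: ifP; case: ifP; lia.
by rewrite /binom /= mulrBr -!mpolyXD -v'E -vE addrA subrK.
Qed.

Lemma binom_chain (J : pset K n) d : is_ideal J -> J (binom (mpos d, mneg d)) ->
  forall (z : int) u v, mnm_rV u - mnm_rV v = z *: d -> J (binom (u, v)).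
Proof.
move=> idJ Jd.
have Jnat (N : nat) u v : mnm_rV u - mnm_rV v = N%:Z *: d -> J (binom (u, v)).
  elim: N u v => [|N IH] u v.
    rewrite scale0r => /eqP; rewrite subr_eq0 => /eqP/mnm_rV_inj ->.
    by rewrite /binom subrr; case: idJ.
  case/binom_shift => v' [c [uv' ->]]; case: idJ => _ JD JM.
  exact: JD (IH _ _ uv') (JM _ _ Jd).
case=> N u v uv; first exact: Jnat uv.
have -> : binom (u, v) = - binom (v, u) by rewrite /binom opprB.
apply: is_idealN (Jnat N.+1 _ _ _) => //.
by rewrite -opprB uv NegzE scaleNr opprK.
Qed.

Lemma toric_ideal_cyclic p (B : 'M[int]_(p, n)) d : d \in kerZ B ->
  (forall w, w \in kerZ B -> exists z : int, w = z *: d) ->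
  same_set (toric_ideal K B) (ideal_gen (fun _ : 'I_1 => binom (mpos d, mneg d))).
Proof.
move=> dB cyc f; split=> [/toric_ideal_binom_decomp[s hs]|].
  apply: binom_ideal_min; first exact: ideal_gen_is_ideal.
  case=> u v /(allP hs); rewrite /homog_pair Amul_eqE => /cyc[z uv].
  by apply: binom_chain uv; [exact: ideal_gen_is_ideal | exact: (ideal_gen_in _ ord0)].
apply: ideal_gen_min; first exact: toric_ideal_is_ideal.
by move=> _; apply/binom_toric_kerZ; rewrite mnm_rV_pos_neg.
Qed.

End ToricLattice.

Section HeightTwo.
Variables (K : fieldType) (n m : nat) (A : 'M[int]_(m, n)).
Hypotheses (ptA : pointed A) (htA : kerQ_dim A = 2%N).
Local Notation I := (toric_ideal K A).
Local Notation binom := (@binom K n).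

Lemma rank_kerQ2 : \rank (kerQ A) = 2%N.
Proof. by rewrite rank_kerQ htA. Qed.

Lemma proper_toric_subideal_principal J :
  is_toric J -> (forall f, J f -> I f) -> ~ same_set J I ->
  exists p, homog_pair A p /\ same_set J (ideal_gen (fun _ : 'I_1 => binom p)).
Proof.
move=> [q [B [_ JB]]] JI JnI.
have BA : {subset kerZ B <= kerZ A} by apply/toric_ideal_subP => f /JB/JI.
(* Otherwise ker_Q(B) would exhaust ker_Q(A) and I_A would be contained in I_B. *)
have rkB : (\rank (kerQ B) <= 1)%N.
  rewrite leqNgt; apply/negP => rkB; apply: JnI => f; split; first exact: JI.
  move=> If; apply/JB; move: f If; apply/toric_ideal_subP => w.
  rewrite !kerZ_kerQ => /submx_trans; apply.
  have [_ <-] := mxrank_leqif_sup (kerQS BA).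
  by rewrite eqn_leq mxrankS ?kerQS // rank_kerQ2.
have [d dB cyc] := kerZ_cyclic rkB.
exists (mpos d, mneg d); split; first by rewrite /homog_pair Amul_eqE mnm_rV_pos_neg BA.
by move=> f; rewrite JB; apply: toric_ideal_cyclic.
Qed.

Lemma binomial_in_proper_toric_subideal g : Defs.binomial g -> I g ->
  exists J, [/\ is_toric J, ~ same_set J I, forall f, J f -> I f & J g].
Proof.
move=> gb Ig; have [c [p [hp ->]]] := binomial_toric gb Ig.
have [d dA [d0 [z pd]]] : exists2 d, d \in kerZ A & d != 0 /\
    exists z : int, mnm_rV p.1 - mnm_rV p.2 = z *: d.
  have [pd0|pd_neq0] := eqVneq (mnm_rV p.1 - mnm_rV p.2) 0.
    have [d dA d0] : exists2 d, d \in kerZ A & d != 0.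
      by apply: kerZ_neq0; rewrite rank_kerQ2.
    by exists d => //; split => //; exists 0; rewrite pd0 scale0r.
  exists (mnm_rV p.1 - mnm_rV p.2); first by rewrite -Amul_eqE.
  by split=> //; exists 1; rewrite scale1r.
have [w [i [j [wA wij]]]] : exists w i j, w \in kerZ A /\ d 0 j * w 0 i != d 0 i * w 0 j.
  by apply: kerZ_not_line d0; rewrite rank_kerQ2.
(* The extra row keeps d, hence u - v, in the kernel but not w. *)
pose B := col_mx A (minor_row d i j).
have BA : {subset kerZ B <= kerZ A} by move=> x; rewrite kerZ_col_mx => /andP[].
exists (toric_ideal K B); split.
- by exists (m + 1)%N, B; split => //; apply: pointedS BA ptA.
- move=> /(_ (binom (mpos w, mneg w))) [_]; rewrite !binom_toric_kerZ mnm_rV_pos_neg.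
  by rewrite kerZ_col_mx kerZ_minor_row (negbTE wij) andbF => /(_ wA).
- exact/toric_ideal_subP.
- rewrite -mul_mpolyC; case: (toric_ideal_is_ideal K B) => _ _; apply.
  by rewrite binom_toric_kerZ pd kerZ_col_mx !kerZZ // kerZ_minor_row mulrC.
Qed.

End HeightTwo.

Lemma toric_is_ideal (K : fieldType) (n : nat) (J : pset K n) : is_toric J -> is_ideal J.
Proof.
move=> [m [B [_ JB]]]; have [J0 JD JM] := toric_ideal_is_ideal K B.
split=> [|f g /JB Jf /JB Jg|q f /JB Jf]; apply/JB; [exact: J0 | exact: JD | exact: JM].
Qed.

Lemma binomial_binom (K : fieldType) (n : nat) (p : mpair n) :
  Defs.binomial (binom p : {mpoly K[n]}).
Proof. by exists p.1, p.2, 1, (-1); rewrite /binom !scaleNr !scale1r. Qed.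

Lemma least_iff (P Q : nat -> Prop) : (forall s, P s <-> Q s) ->
  forall s, least P s <-> least Q s.
Proof.
move=> PQ s; split=> -[Ps Pmin]; split=> [|j /PQ]; by [apply/PQ | apply: Pmin].
Qed.

Section Splittings.
Variables (K : fieldType) (n m : nat) (A : 'M[int]_(m, n)).
Hypotheses (ptA : pointed A) (htA : kerQ_dim A = 2%N).
Local Notation I := (toric_ideal K A).
Local Notation binom := (@binom K n).

Lemma proper_toric_principal_family s (Js : 'I_s -> pset K n) :
  (forall i, is_toric (Js i)) -> (forall i, ~ same_set (Js i) I) ->
  (forall i f, Js i f -> I f) ->
  exists P : 'I_s -> mpair n, forall i,
    homog_pair A (P i) /\ same_set (Js i) (ideal_gen (fun _ : 'I_1 => binom (P i))).
Proof.
move=> Jt JnI JI.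
exact: fin_all_exists (fun i => proper_toric_subideal_principal htA (Jt i) (JI i) (JnI i)).
Qed.

Lemma proper_toric_cover s (g : 'I_s -> {mpoly K[n]}) :
  (forall i, Defs.binomial (g i)) -> (forall i, I (g i)) ->
  exists Js : 'I_s -> pset K n, forall i,
    [/\ is_toric (Js i), ~ same_set (Js i) I, forall f, Js i f -> I f & Js i (g i)].
Proof.
move=> gb gI.
exact: fin_all_exists (fun i => binomial_in_proper_toric_subideal ptA htA (gb i) (gI i)).
Qed.

Lemma split_mu s : split_prop I s -> mu_prop I s.
Proof.
move=> [Js [Jt [JnI IJ]]].
have JI i f : Js i f -> I f.
  by move=> Jf; apply/IJ; apply: ideal_sum_mem Jf => j; case: (toric_is_ideal (Jt j)).
have [P hP] := proper_toric_principal_family Jt JnI JI.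
exists (fun i => binom (P i)) => f; rewrite IJ.
by apply: ideal_sum_principal => i; case: (hP i).
Qed.

Lemma mu_split t : mu_prop I t -> split_prop I t.
Proof.
move=> /(binomial_generators ptA) [P [hP IP]].
have [Js hJ] := proper_toric_cover (fun i => binomial_binom K (P i))
  (fun i => proj2 binom_toricP (hP i)).
exists Js; split; first by move=> i; case: (hJ i).
split=> [i|f]; first by case: (hJ i).
split=> [/IP|]; first by apply: ideal_gen_sub_sum => i; case: (hJ i) => /toric_is_ideal.
apply: (ideal_sum_min (toric_ideal_is_ideal K A)) => i; by case: (hJ i).
Qed.

Lemma split_rad_bar r : split_rad_prop I r -> bar_prop I r.
Proof.
move=> [Js [Jt [JnI IJ]]].
have JI i f : Js i f -> I f.
  move=> Jf; apply/IJ; exists 1%N; rewrite expr1.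
  by apply: ideal_sum_mem Jf => j; case: (toric_is_ideal (Jt j)).
have [P hP] := proper_toric_principal_family Jt JnI JI.
exists (fun i => binom (P i)); split=> [i|]; first exact: binomial_binom.
split=> [i|f]; first by apply/binom_toricP; case: (hP i).
by rewrite IJ; apply: same_set_rad; apply: ideal_sum_principal => i; case: (hP i).
Qed.

Lemma bar_split_rad r : bar_prop I r -> split_rad_prop I r.
Proof.
move=> [g [gb [gI Irad]]].
have [Js hJ] := proper_toric_cover gb gI.
exists Js; split; first by move=> i; case: (hJ i).
split=> [i|f]; first by case: (hJ i).
split=> [/Irad [k gk]|[k Jk]]; first exists k.
  by apply: ideal_gen_sub_sum gk => i; case: (hJ i) => /toric_is_ideal.
apply/Irad/rad_rad; exists k; apply/Irad.
by apply: ideal_sum_min Jk => [|i]; [exact: toric_ideal_is_ideal | case: (hJ i)].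
Qed.

End Splittings.

Theorem theorem4p1 (K : fieldType) (n m : nat) (A : 'M[int]_(m, n)) :
  pointed A ->
  kerQ_dim A = 2%N ->
  (forall s : nat,
     least (split_prop (toric_ideal K A)) s <-> least (mu_prop (toric_ideal K A)) s) /\
  (forall r : nat,
     least (split_rad_prop (toric_ideal K A)) r <-> least (bar_prop (toric_ideal K A)) r).
Proof.
move=> ptA htA; split; apply: least_iff => s; split.
- exact: split_mu.
- exact: mu_split.
- exact: split_rad_bar.
- exact: bar_split_rad.
Qed.
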